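(* Let $n\ge k\ge d$ be positive integers and let $G\subseteq\mathbb{Z}[\mathbf{x}_n,\mathbf{y}_d]$ be the set consisting of $h_r(\mathbf{y}_d)$ for all $r>k-d$; $e_r(\mathbf{x}_n) - e_{r-1}(\mathbf{x}_n)h_1(\mathbf{y}_d)+\cdots+(-1)^r h_r(\mathbf{y}_d)$ for all $r>n-d$; and $x_i^d - x_i^{d-1}e_1(\mathbf{y}_d)+\cdots+(-1)^d e_d(\mathbf{y}_d)$ for $i=1,\dots,n$. Let $J_{n,k,d}\subseteq\mathbb{Z}[\mathbf{x}_n,\mathbf{y}_d]$ be the ideal generated by $G$. If $f\in J_{n,k,d}\cap\mathbb{Z}[\mathbf{x}_n,\mathbf{y}_d]^{\mathfrak{S}_d}$, then $d!\cdot f$ lies in the ideal of $\mathbb{Z}[\mathbf{x}_n,\mathbf{y}_d]^{\mathfrak{S}_d}$ generated by $G$.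
   Context: $\mathbf{x}_n=(x_1,\dots,x_n)$, $\mathbf{y}_d=(y_1,\dots,y_d)$; $\mathfrak{S}_d$ acts by permuting the $y$-variables. $e_r,h_r$ are elementary and complete homogeneous symmetric polynomials ($e_0=h_0=1$, $e_r=0$ when $r$ exceeds the number of variables). *)

From HB Require Import structures.
From mathcomp Require Import all_boot all_order all_algebra all_fingroup.
From mathcomp Require Import mpoly.
Set Implicit Arguments. Unset Strict Implicit. Unset Printing Implicit Defensive.
Import GRing.Theory.
Local Open Scope ring_scope.

(* The ring Z[x_1..x_n, y_1..y_d] is {mpoly int[n + d]}:
   variable index (lshift d i) is x_(i+1), index (rshift n j) is y_(j+1). *)
Section Defs.
Variables n d : nat.
Local Notation P := {mpoly int[n + d]}.

Definition xv (i : 'I_n) : P := 'X_(lshift d i).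
Definition yv (j : 'I_d) : P := 'X_(rshift n j).

Definition ex (r : nat) : P :=
  \sum_(S : {set 'I_n} | #|S| == r) \prod_(i in S) xv i.
Definition ey (r : nat) : P :=
  \sum_(S : {set 'I_d} | #|S| == r) \prod_(j in S) yv j.
Definition hy (r : nat) : P :=
  \sum_(t : r.-tuple 'I_d | sorted (fun a b : 'I_d => (a <= b)%N) t)
     \prod_(j <- t) yv j.

Definition gE (r : nat) : P :=
  \sum_(j < r.+1) (-1) ^+ j * ex (r - j) * hy j.
Definition gX (i : 'I_n) : P :=
  \sum_(j < d.+1) (-1) ^+ j * xv i ^+ (d - j) * ey j.

Definition Gset (k : nat) (g : P) : Prop :=
  (exists2 r : nat, (k - d < r)%N & g = hy r) \/
  (exists2 r : nat, (n - d < r)%N & g = gE r) \/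
  (exists i : 'I_n, g = gX i).

Definition yperm (s : 'S_d) (v : 'I_(n + d)) : 'I_(n + d) :=
  match split v with
  | inl a => lshift d a
  | inr b => rshift n (s b)
  end.
Definition yact (s : 'S_d) (p : P) : P :=
  mmap (@mpolyC _ int) (fun v => 'X_(yperm s v)) p.

Definition ysym (p : P) : Prop := forall s : 'S_d, yact s p = p.

(* membership of f in the ideal, of the subring {p | A p}, generated by G:
   f is a finite sum of c * g with A c and G g *)
Definition in_ideal_of (A G : P -> Prop) (f : P) : Prop :=
  exists cs : seq (P * P),
    (forall c, c \in cs -> A c.1 /\ G c.2) /\ f = \sum_(c <- cs) c.1 * c.2.
End Defs.

(* Every element of G is S_d-invariant, so applying the Reynolds operator
   R(p) = \sum_{s in S_d} s(p) to f = \sum c_i g_i gives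
   d! f = R(f) = \sum R(c_i) g_i, and each R(c_i) is S_d-invariant. *)
From HB Require Import structures.
From mathcomp Require Import all_boot all_order all_algebra all_fingroup.
From mathcomp Require Import mpoly.
Set Implicit Arguments. Unset Strict Implicit. Unset Printing Implicit Defensive.
Import GRing.Theory.
Local Open Scope ring_scope.

Section Reynolds.
Variables (R : comNzRingType) (gT : finGroupType) (act : gT -> {rmorphism R -> R}).
Hypothesis actM : forall s t p, act (s * t)%g p = act t (act s p).

Definition reynolds (p : R) : R := \sum_(s : gT) act s p.

Lemma reynolds_invariant t p : act t (reynolds p) = reynolds p.
Proof.
rewrite rmorph_sum [RHS](reindex_inj (mulIg t)) /=.
by apply: eq_bigr => s _; rewrite actM.
Qed.

Lemma reynolds_fixed p : (forall s, act s p = p) -> reynolds p = p *+ #|gT|.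
Proof. by move=> fix_p; rewrite /reynolds (eq_bigr _ (fun s _ => fix_p s)) sumr_const. Qed.

Lemma reynolds_combination (cs : seq (R * R)) :
  (forall c s, c \in cs -> act s c.2 = c.2) ->
  reynolds (\sum_(c <- cs) c.1 * c.2) = \sum_(c <- cs) reynolds c.1 * c.2.
Proof.
move=> fix_cs; rewrite /reynolds (eq_bigr _ (fun s _ => rmorph_sum (act s) _ _ _)).
rewrite exchange_big /= !big_seq; apply: eq_bigr => c cs_c.
by rewrite mulr_suml; apply: eq_bigr => s _; rewrite rmorphM fix_cs.
Qed.

End Reynolds.

Section PermSums.
Variables (R : comNzRingType) (T : finType).

Lemma sum_prod_sets_perm (r : nat) (F : T -> R) (s : {perm T}) :
  \sum_(S : {set T} | #|S| == r) \prod_(j in S) F (s j) =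
  \sum_(S : {set T} | #|S| == r) \prod_(j in S) F j.
Proof.
rewrite [RHS](reindex (fun S : {set T} => s @: S)) /=; last first.
  exists (fun S : {set T} => s^-1 @: S)%g => S _;
    by rewrite -imset_comp ?(eq_imset _ (permK s)) ?(eq_imset _ (permKV s)) imset_id.
apply: eq_big => [S | S _]; first by rewrite card_imset //; apply: perm_inj.
by rewrite big_imset //= => x y _ _; apply: perm_inj.
Qed.

Variables (le : rel T).
Hypotheses (le_total : total le) (le_trans : transitive le)
  (le_anti : antisymmetric le).

Definition sort_perm_tuple (s : {perm T}) r (t : r.-tuple T) : r.-tuple T :=
  [tuple of sort le (map s t)].

Lemma sort_perm_tupleK (s : {perm T}) r (t : r.-tuple T) :
  sorted le t -> sort_perm_tuple s^-1 (sort_perm_tuple s t) = t.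
Proof.
move=> sorted_t; apply: val_inj => /=.
rewrite -[RHS](sorted_sort le_trans sorted_t).
apply/(perm_sortP le_total le_trans le_anti).
by rewrite -{2}[val t](mapK (permK s)) perm_map // perm_sort.
Qed.

Lemma sum_prod_sorted_tuples_perm (r : nat) (F : T -> R) (s : {perm T}) :
  \sum_(t : r.-tuple T | sorted le t) \prod_(j <- t) F (s j) =
  \sum_(t : r.-tuple T | sorted le t) \prod_(j <- t) F j.
Proof.
rewrite [RHS](reindex_onto (@sort_perm_tuple s r) (@sort_perm_tuple s^-1 r)) /=;
  last by move=> t sorted_t; have := sort_perm_tupleK s^-1 sorted_t; rewrite invgK.
apply: eq_big => [t | t _].
  apply/idP/andP => [sorted_t | [_ /eqP <-]]; last exact: sort_sorted.
  by rewrite sort_perm_tupleK ?sort_sorted.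
by rewrite (perm_big _ (permEl (perm_sort le _))) big_map.
Qed.

End PermSums.

Lemma msymXn (N : nat) (R : nzRingType) (s : 'S_N) (p : {mpoly R[N]}) k :
  msym s (p ^+ k) = msym s p ^+ k.
Proof. exact: rmorphXn. Qed.

Section YAction.
Variables n d : nat.
Local Notation P := {mpoly int[n + d]}.

Lemma split_lshift (i : 'I_n) : split (lshift d i) = inl i.
Proof. exact: (unsplitK (inl _ i)). Qed.

Lemma split_rshift (j : 'I_d) : split (rshift n j) = inr j.
Proof. exact: (unsplitK (inr _ j)). Qed.

Lemma yperm_inj (s : 'S_d) : injective (@yperm n d s).
Proof.
move=> u v; rewrite /yperm -[u]splitK -[v]splitK.
case: (split u) => [a|b]; case: (split v) => [a'|b'] /(congr1 split);
  rewrite ?split_lshift ?split_rshift => -[] //.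
- by move=> ->.
- by move/perm_inj=> ->.
Qed.

Definition yperm_perm (s : 'S_d) : 'S_(n + d) := perm (@yperm_inj s).

Lemma yperm_permM (s t : 'S_d) :
  yperm_perm (s * t)%g = (yperm_perm s * yperm_perm t)%g.
Proof.
apply/permP => v; rewrite permM !permE /yperm.
by case: (split_ordP v) => [a _|b _]; rewrite ?split_lshift ?split_rshift ?permM.
Qed.

Lemma yactE (s : 'S_d) : yact s =1 msym (yperm_perm s).
Proof.
move=> p; apply: eq_bigr => m _; congr (_ * _).
by apply: mmap1_eq => v; rewrite permE.
Qed.

Lemma msym_yperm_permM (s t : 'S_d) (p : P) :
  msym (yperm_perm (s * t)%g) p = msym (yperm_perm t) (msym (yperm_perm s) p).
Proof. by rewrite yperm_permM msymMm. Qed.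

Lemma msym_yperm_xv (s : 'S_d) (i : 'I_n) : msym (yperm_perm s) (@xv n d i) = @xv n d i.
Proof. by rewrite -yactE /yact /xv mmapX mmap1U /yperm split_lshift. Qed.

Lemma msym_yperm_yv (s : 'S_d) (j : 'I_d) : msym (yperm_perm s) (@yv n d j) = @yv n d (s j).
Proof. by rewrite -yactE /yact /yv mmapX mmap1U /yperm split_rshift. Qed.

Lemma msym_yperm_ex (s : 'S_d) r : msym (yperm_perm s) (ex n d r) = ex n d r.
Proof.
rewrite rmorph_sum; apply: eq_bigr => S _.
by rewrite rmorph_prod; apply: eq_bigr => i _; apply: msym_yperm_xv.
Qed.

Lemma msym_yperm_ey (s : 'S_d) r : msym (yperm_perm s) (ey n d r) = ey n d r.
Proof.
rewrite rmorph_sum -[RHS](sum_prod_sets_perm _ _ s); apply: eq_bigr => S _.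
by rewrite rmorph_prod; apply: eq_bigr => j _; apply: msym_yperm_yv.
Qed.

Lemma msym_yperm_hy (s : 'S_d) r : msym (yperm_perm s) (hy n d r) = hy n d r.
Proof.
have le_total : total (fun a b : 'I_d => (a <= b)%N) by move=> ? ?; apply: leq_total.
have le_trans : transitive (fun a b : 'I_d => (a <= b)%N) by move=> ? ? ?; apply: leq_trans.
have le_anti : antisymmetric (fun a b : 'I_d => (a <= b)%N).
  by move=> a b /anti_leq; apply: val_inj.
rewrite rmorph_sum -[RHS](sum_prod_sorted_tuples_perm le_total le_trans le_anti _ _ s).
apply: eq_bigr => t _.
by rewrite rmorph_prod; apply: eq_bigr => j _; apply: msym_yperm_yv.
Qed.

Lemma msym_yperm_gE (s : 'S_d) r : msym (yperm_perm s) (gE n d r) = gE n d r.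
Proof.
rewrite rmorph_sum; apply: eq_bigr => j _ /=.
by rewrite !msymM msymXn msymN msym1 msym_yperm_ex msym_yperm_hy.
Qed.

Lemma msym_yperm_gX (s : 'S_d) i : msym (yperm_perm s) (@gX n d i) = @gX n d i.
Proof.
rewrite rmorph_sum; apply: eq_bigr => j _ /=.
by rewrite !msymM !msymXn msymN msym1 msym_yperm_xv msym_yperm_ey.
Qed.

Lemma msym_yperm_Gset k (g : P) (s : 'S_d) : Gset k g -> msym (yperm_perm s) g = g.
Proof.
case=> [[r _ ->] | [[r _ ->] | [i ->]]].
- exact: msym_yperm_hy.
- exact: msym_yperm_gE.
- exact: msym_yperm_gX.
Qed.

End YAction.

Theorem lemma4p10 (n k d : nat) (hd : (0 < d)%N) (hdk : (d <= k)%N)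
  (hkn : (k <= n)%N) (f : {mpoly int[n + d]}) :
  in_ideal_of (fun _ => True) (@Gset n d k) f ->
  ysym f ->
  in_ideal_of (@ysym n d) (@Gset n d k) (f *+ d`!).
Proof.
move=> [cs [cs_G f_def]] sym_f.
pose act (s : 'S_d) : {rmorphism {mpoly int[n + d]} -> _} := msym (yperm_perm n s).
exists [seq (reynolds act c.1, c.2) | c <- cs]; split.
  move=> _ /mapP[c cs_c ->]; split=> [s | ]; last exact: (cs_G c cs_c).2.
  by rewrite yactE (reynolds_invariant (@msym_yperm_permM n d)).
have fix_f s : act s f = f by rewrite /= -yactE sym_f.
rewrite -card_Sn -(reynolds_fixed fix_f) {1}f_def reynolds_combination ?big_map //.
by move=> c s /cs_G[_ G_c]; apply: msym_yperm_Gset G_c.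
Qed.
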